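(* Let $K$ be a finite field of order $q$ and $s$ a positive integer with $\gcd(s,q-1)=1$. For any positive integer $k$, any $b,t_1,\dots,t_k\in K^\times$ and any $a\in K$, $$Q^{(t_1,\dots,t_k)}_{a,b}=\frac{Q^{(a/b,t_1,\dots,t_k)}_{0,0}-Q^{(t_1,\dots,t_k)}_{0,0}}{q-1}.$$
   Context: Let $1/s$ denote the inverse of $s$ modulo $q-1$, so $x\mapsto x^{1/s}$ is the inverse permutation of $x\mapsto x^s$ on $K$. For $t=(t_1,\dots,t_k)\in K^k$ and $v=(v_1,\dots,v_k)\in K^k$ write $t\cdot v=t_1v_1+\cdots+t_kv_k$ and $\langle v\rangle=(v_1^s+\cdots+v_k^s)^{1/s}$. For $a,b\in K$, $Q^t_{a,b}$ denotes the number of $v\in K^k$ with $t\cdot v=a$ and $\langle v\rangle=b$. *)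

From mathcomp Require Import all_boot all_order all_algebra.
Set Implicit Arguments. Unset Strict Implicit. Unset Printing Implicit Defensive.
Import GRing.Theory.
Local Open Scope ring_scope.

(* The inverse of s modulo m, as a representative u with 1 <= u <= m
   (m = q - 1 >= 1 in our use).  Defaults to 1 if no inverse exists. *)
Definition inv_mod (s m : nat) : nat :=
  odflt 1%N (omap (@nat_of_ord m.+1)
    [pick u : 'I_m.+1 | (0 < u)%N && (s * u == 1 %[mod m])%N]).

Definition sroot (K : finFieldType) (s : nat) (x : K) : K :=
  x ^+ (inv_mod s #|K|.-1).

Definition sbracket (K : finFieldType) (s : nat) (n : nat) (v : {ffun 'I_n -> K}) : K :=
  sroot s (\sum_(i < n) v i ^+ s).

Definition dotv (K : finFieldType) (t : seq K) (v : {ffun 'I_(size t) -> K}) : K :=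
  \sum_(i < size t) t`_i * v i.

Definition Qcount (K : finFieldType) (s : nat) (t : seq K) (a b : K) : nat :=
  #|[set v : {ffun 'I_(size t) -> K} | (dotv v == a) && (sbracket s v == b)]|.

From mathcomp Require Import all_boot all_order all_algebra all_field.
From mathcomp Require Import ring.
Import GRing.Theory.
Local Open Scope ring_scope.
Set Implicit Arguments. Unset Strict Implicit.

(* Put c = a/b.  A vector (x, w) counted by Q^{(c,t)}_{0,0} either has x = 0,
   and then w is counted by Q^t_{0,0}, or x <> 0.  Since x |-> x^s is a
   bijection of K, <v> = b just means sum_i v_i^s = b^s, and (-y)^s = -y^s.
   Both defining equations are then homogeneous of the same degree in (x, w),
   so (x, w) |-> (-x/b, -b w/x) is a bijection from the solutions with x <> 0
   onto K^* times the vectors counted by Q^t_{a,b}.  Hence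
   Q^{(c,t)}_{0,0} = Q^t_{0,0} + (q - 1) Q^t_{a,b}. *)

Lemma inv_mod_spec (s m : nat) : (0 < s)%N -> (0 < m)%N -> coprime s m ->
  (0 < inv_mod s m)%N /\ (s * inv_mod s m = 1 %[mod m])%N.
Proof.
move=> s_gt0 m_gt0 co_sm; rewrite /inv_mod.
case: pickP => [u /andP[u_gt0 /eqP su1] | no_inv] //=; exfalso.
case: (egcdnP m s_gt0) => km kn def_km _.
have skm1 : (s * km = 1 %[mod m])%N.
  by rewrite mulnC def_km (eqP co_sm) -modnDml modnMl.
pose u := if (km %% m == 0)%N then m else (km %% m)%N.
have u_lt : (u < m.+1)%N by rewrite /u; case: ifP => // _; rewrite ltnS ltnW ?ltn_mod.
have u_km : (u = km %[mod m])%N.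
  by rewrite /u; case: ifP => [/eqP-> | _]; rewrite ?modnn ?modn_mod.
have u_gt0 : (0 < u)%N by rewrite /u; case: ifP => // /negbT; rewrite lt0n.
by have := no_inv (Ordinal u_lt); rewrite /= u_gt0 -modnMmr u_km modnMmr skm1 eqxx.
Qed.

Lemma expf_eq1_mod (K : finFieldType) (x : K) (n : nat) :
  (0 < n)%N -> (n = 1 %[mod #|K|.-1])%N -> x ^+ n = x.
Proof.
move=> n_gt0 /eqP; rewrite eqn_mod_dvd // => /dvdnP[j def_n].
rewrite -(subnK n_gt0) def_n {n n_gt0 def_n}.
elim: j => [|j IHj]; first by rewrite add0n expr1.
have cardK : #|K| = #|K|.-1.+1 by rewrite prednK //; apply/card_gt0P; exists x.
by rewrite mulSn -addnA exprD IHj -exprSr -cardK expf_card.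
Qed.

Section PowerBijection.
Variables (K : finFieldType) (s : nat).
Hypotheses (s_gt0 : (0 < s)%N) (s_coprime : coprime s #|K|.-1).

Lemma expr_s_inv_mod (x : K) : x ^+ (s * inv_mod s #|K|.-1) = x.
Proof.
have q1_gt0 : (0 < #|K|.-1)%N by rewrite ltn_predRL card_finNzRing_gt1.
have [u_gt0 su1] := inv_mod_spec s_gt0 q1_gt0 s_coprime.
by rewrite expf_eq1_mod // muln_gt0 s_gt0.
Qed.

Lemma exprsK : cancel (fun x : K => x ^+ s) (sroot s).
Proof. by move=> x; rewrite /sroot -exprM expr_s_inv_mod. Qed.

Lemma srootK : cancel (sroot s) (fun x : K => x ^+ s).
Proof. by move=> x; rewrite /sroot -exprM mulnC expr_s_inv_mod. Qed.

Lemma sroot_eq (y z : K) : (sroot s y == z) = (y == z ^+ s).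
Proof. by rewrite (can2_eq srootK exprsK). Qed.

Lemma exprNs (x : K) : (- x) ^+ s = - x ^+ s.
Proof.
rewrite -mulN1r exprMn -signr_odd; case s_odd: (odd s); first by rewrite mulN1r.
(* For even s, injectivity of x |-> x^s forces -1 = 1. *)
suff m1E : -1 = 1 :> K by rewrite expr0 mul1r -mulN1r m1E mul1r.
by apply: (can_inj exprsK); rewrite /= expr1n -signr_odd s_odd.
Qed.

End PowerBijection.

Section FfunCons.
Variables (T : finType) (n : nat).

Definition ffcons (x : T) (w : {ffun 'I_n -> T}) : {ffun 'I_n.+1 -> T} :=
  [ffun i => oapp w x (unlift ord0 i)].

Lemma ffcons0 x w : ffcons x w ord0 = x.
Proof. by rewrite ffunE unlift_none. Qed.

Lemma ffconsS x w i : ffcons x w (lift ord0 i) = w i.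
Proof. by rewrite ffunE liftK. Qed.

Lemma ffcons_bij : bijective (fun p : T * {ffun 'I_n -> T} => ffcons p.1 p.2).
Proof.
exists (fun v : {ffun 'I_n.+1 -> T} => (v ord0, [ffun i : 'I_n => v (lift ord0 i)])).
  move=> [x w] /=.
  by rewrite ffcons0; congr pair; apply/ffunP => i; rewrite ffunE ffconsS.
move=> v; apply/ffunP => i; rewrite ffunE.
by case: unliftP => [j ->|->] //=; rewrite ffunE.
Qed.

Lemma card_ffcons (A : {pred {ffun 'I_n.+1 -> T}}) :
  #|[set p : T * {ffun 'I_n -> T} | ffcons p.1 p.2 \in A]| = #|A|.
Proof.
rewrite -(on_card_preimset (onW_bij _ ffcons_bij)).
by apply: eq_card => p; rewrite !inE.
Qed.

Lemma sum_ffcons (R : nmodType) (F : T -> R) x w :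
  \sum_(i < n.+1) F (ffcons x w i) = F x + \sum_(i < n) F (w i).
Proof. by rewrite big_ord_recl ffcons0; under eq_bigr do rewrite ffconsS. Qed.

End FfunCons.

Section Counting.
Variables (K : finFieldType) (s : nat).
Hypotheses (s_gt0 : (0 < s)%N) (s_coprime : coprime s #|K|.-1).
Variable t : seq K.
Local Notation vec := {ffun 'I_(size t) -> K}.

Let expr0s : (0 : K) ^+ s = 0. Proof. by rewrite expr0n gtn_eqF. Qed.

Lemma dotv_cons (c x : K) (w : vec) : @dotv K (c :: t) (ffcons x w) = c * x + dotv w.
Proof. by rewrite /dotv big_ord_recl ffcons0; under eq_bigr do rewrite ffconsS. Qed.

Lemma dotv_scale (l : K) (w : vec) : dotv [ffun i => l * w i] = l * dotv w.
Proof. by rewrite /dotv mulr_sumr; apply: eq_bigr => i _; rewrite ffunE mulrCA. Qed.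

Lemma sum_expr_scale (l : K) (w : vec) :
  \sum_i [ffun i => l * w i] i ^+ s = l ^+ s * \sum_i w i ^+ s.
Proof. by rewrite mulr_sumr; apply: eq_bigr => i _; rewrite ffunE exprMn. Qed.

Definition Qset (a b : K) : {set vec} :=
  [set v | (dotv v == a) && (\sum_i v i ^+ s == b ^+ s)].

Lemma QcountE (a b : K) : Qcount s t a b = #|Qset a b|.
Proof. by apply: eq_card => v; rewrite !inE /sbracket sroot_eq. Qed.

Definition null_pairs (c : K) : {set K * vec} :=
  [set p | (c * p.1 + dotv p.2 == 0) && (p.1 ^+ s + \sum_i p.2 i ^+ s == 0)].

Lemma Qcount_cons00_null_pairs (c : K) : Qcount s (c :: t) 0 0 = #|null_pairs c|.
Proof.
rewrite /Qcount -card_ffcons; apply: eq_card => -[x w].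
by rewrite !inE /= dotv_cons /sbracket (sum_ffcons (fun y => y ^+ s)) sroot_eq // expr0s.
Qed.

Lemma card_null_pairs_head0 (c : K) :
  #|null_pairs c :&: [set p | p.1 == 0]| = #|Qset 0 0|.
Proof.
have inj_pair0 : injective (fun w : vec => (0 : K, w)) by move=> w w' [].
rewrite -(card_imset _ inj_pair0); apply: eq_card => -[x w]; rewrite !inE /=.
apply/andP/imsetP => [[/andP[dot0 sum0] /eqP x0] | [w' w'Q [-> ->]]].
  move: dot0 sum0; rewrite x0 mulr0 add0r expr0s add0r => dot0 sum0.
  by exists w; rewrite ?x0 // inE expr0s dot0 sum0.
by move: w'Q; rewrite !inE mulr0 add0r expr0s add0r eqxx => ->.
Qed.

Section NonzeroHead.
Variables (c b : K).
Hypothesis b_nz : b != 0.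

Lemma null_pairs_scale (l : K) (w : vec) : l != 0 ->
  ((- (l * b), [ffun i => l * w i]) \in null_pairs c) = (w \in Qset (c * b) b).
Proof.
move=> l_nz; rewrite !inE /= dotv_scale sum_expr_scale exprNs // exprMn.
have -> : c * - (l * b) + l * dotv w = l * (dotv w - c * b) by ring.
have -> : - (l ^+ s * b ^+ s) + l ^+ s * \sum_i w i ^+ s =
          l ^+ s * (\sum_i w i ^+ s - b ^+ s) by ring.
by rewrite !mulf_eq0 expf_eq0 (negbTE l_nz) andbF !subr_eq0.
Qed.

Lemma card_null_pairs_head_neq0 :
  #|null_pairs c :\: [set p | p.1 == 0]| = (#|K|.-1 * #|Qset (c * b)%R b|)%N.
Proof.
pose g (p : K * vec) := (- (p.1 * b), [ffun i => p.1 * p.2 i]).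
have g_inj : {in setX [set~ 0] (Qset (c * b) b) &, injective g}.
  move=> [l w] [l' w']; rewrite !inE /= => /andP[l_nz _] _.
  move=> [/oppr_inj/(mulIf b_nz) <- /ffunP ww'].
  by congr pair; apply/ffunP => i; move: (ww' i); rewrite !ffunE; apply: mulfI.
rewrite -(cardsC1 (0 : K)) -cardsX -(card_in_imset g_inj); apply: eq_card => -[x v].
rewrite in_setD inE /=; apply/andP/imsetP => [[x_nz xv_null] | [[l w]]].
  pose l := - x / b.
  have l_nz : l != 0 by rewrite mulf_neq0 ?oppr_eq0 ?invr_eq0.
  have g_lw : g (l, [ffun i => l^-1 * v i]) = (x, v).
    congr pair; first by rewrite /= divfK ?opprK.
    by apply/ffunP => i; rewrite !ffunE mulrA mulfV // mul1r.
  exists (l, [ffun i => l^-1 * v i]) => //.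
  rewrite inE /= in_setC1 l_nz -(null_pairs_scale _ l_nz).
  by move: xv_null; rewrite -g_lw.
rewrite inE /= in_setC1 => /andP[l_nz wQ] [-> ->].
by rewrite oppr_eq0 mulf_neq0 // null_pairs_scale.
Qed.

End NonzeroHead.

Lemma Qcount_cons00 (c b : K) : b != 0 ->
  Qcount s (c :: t) 0 0 = (Qcount s t 0%R 0%R + #|K|.-1 * Qcount s t (c * b)%R b)%N.
Proof.
move=> b_nz; rewrite Qcount_cons00_null_pairs -(cardsID [set p | p.1 == 0]).
by rewrite card_null_pairs_head0 (card_null_pairs_head_neq0 c b_nz) !QcountE.
Qed.

End Counting.

Unset Implicit Arguments.

(* The identity holds without [k_pos] and [t_nz]. *)
Theorem lemma4p6 (K : finFieldType) (s : nat) (s_pos : (0 < s)%N)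
    (s_coprime : coprime s #|K|.-1)
    (t : seq K) (k_pos : (0 < size t)%N) (t_nz : all (fun x => x != 0) t)
    (a b : K) (b_nz : b != 0) :
  (Qcount s t a b)%:R =
    ((Qcount s (a / b :: t) 0 0)%:R - (Qcount s t 0 0)%:R) / (#|K|.-1)%:R
    :> rat.
Proof.
rewrite (Qcount_cons00 s_pos s_coprime t (a / b) b_nz) divfK //.
rewrite natrD natrM addrAC subrr add0r mulrC mulKf //.
by rewrite Num.Theory.pnatr_eq0 -lt0n ltn_predRL card_finNzRing_gt1.
Qed.
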